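(* Let $\mathbb K$ be a field with $2\in\mathbb K^\times$, $A$ a unital commutative associative $\mathbb K$-algebra, and $\mathfrak k$ a $\mathbb K$-Lie algebra with $H^1(\mathfrak k,\mathfrak k^* )=\{0\}$. Then $\mathfrak g=A\otimes\mathfrak k$ has no coupled cocycles.
   Context: $\mathfrak k^*$ is the coadjoint module, $(x.\lambda)(y)=-\lambda([x,y])$, and $H^1(\mathfrak k,\mathfrak k^* )$ is Chevalley–Eilenberg cohomology. $\mathfrak g$ has bracket $[a\otimes x,a'\otimes x']=aa'\otimes[x,x']$, $ax=a\otimes x$, unit $\mathbf 1$. $v\wedge w=\tfrac12(v\otimes w-w\otimes v)$, $v\vee w=\tfrac12(v\otimes w+w\otimes v)$; $I_A$ is the kernel of multiplication $S^2(A)\to A$. $p_1(ax\wedge by)=a\wedge b\otimes x\vee y$, $p_2(ax\wedge by)=ab\otimes x\wedge y$, $p_3(ax\wedge by)=(a\vee b-ab\vee\mathbf 1)\otimes x\wedge y$ give an isomorphism $\Lambda^2(\mathfrak g)\cong(\Lambda^2(A)\otimes S^2(\mathfrak k))\oplus(A\otimes\Lambda^2(\mathfrak k))\oplus(I_A\otimes\Lambda^2(\mathfrak k))$, so each linear $f:\Lambda^2(\mathfrak g)\to\mathfrak z$ is uniquely $f_1\circ p_1+f_2\circ p_2+f_3\circ p_3$. A 2-cocycle is such an $f$ vanishing on the span of $[u,v]\wedge w+[v,w]\wedge u+[w,u]\wedge v$. A coupled cocycle is a $\mathfrak z$-valued 2-cocycle, for some vector space $\mathfrak z$, with $f_3=0$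 such that $f_1\circ p_1$ is not a 2-cocycle. *)

From HB Require Import structures.
From mathcomp Require Import all_boot all_algebra.
Set Implicit Arguments. Unset Strict Implicit. Unset Printing Implicit Defensive.
Import GRing.Theory.
Local Open Scope ring_scope.

Definition lin (K : fieldType) (U V : lmodType K) (f : U -> V) : Prop :=
  forall (r : K) (u u' : U), f (r *: u + u') = r *: f u + f u'.

Definition lin_form (K : fieldType) (U : lmodType K) (f : U -> K) : Prop :=
  forall (r : K) (u u' : U), f (r *: u + u') = r * f u + f u'.

Definition lie_bracket (K : fieldType) (k : lmodType K) (br : k -> k -> k) : Prop :=
  [/\ forall y, lin (fun x => br x y),
      forall x, lin (br x),
      forall x, br x x = 0
    & forall x y w, br x (br y w) + br y (br w x) + br w (br x y) = 0].

(* H^1(k, k^* ) = 0 for the coadjoint module (x.l)(y) = - l([x,y]).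
   A 1-cochain D : k -> k^* is encoded (currying k^* = linear forms on k)
   as the bilinear map (x, w) |-> D(x)(w).
   1-cocycle:  D([x,y]) = x.D(y) - y.D(x),  i.e.
               D([x,y])(w) = - D(y)([x,w]) + D(x)([y,w]).
   1-coboundary: D(x) = x.l for some l in k^*, i.e. D(x)(w) = - l([x,w]). *)
Definition H1_coadjoint_trivial (K : fieldType) (k : lmodType K)
    (br : k -> k -> k) : Prop :=
  forall D : k -> k -> K,
    (forall x, lin_form (D x)) ->
    (forall w, lin_form (fun x => D x w)) ->
    (forall x y w, D (br x y) w = - D y (br x w) + D x (br y w)) ->
    exists l : k -> K, lin_form l /\ forall x w, D x w = - l (br x w).

(* A linear map f1 : Lambda^2(A) (x) S^2(k) -> z, encoded by the multilinear
   map phi(a,b,x,y) = f1(a /\ b (x) x \/ y): linear in each argument,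
   antisymmetric in (a,b), symmetric in (x,y). *)
Definition f1_data (K : fieldType) (A : comAlgType K) (k z : lmodType K)
    (phi : A -> A -> k -> k -> z) : Prop :=
  (forall b x y, lin (fun a => phi a b x y)) /\
  (forall a x y, lin (fun b => phi a b x y)) /\
  (forall a b y, lin (fun x => phi a b x y)) /\
  (forall a b x, lin (fun y => phi a b x y)) /\
  (forall a b x y, phi b a x y = - phi a b x y) /\
  (forall a b x y, phi a b y x = phi a b x y).

(* A linear map f2 : A (x) Lambda^2(k) -> z, encoded by the multilinear map
   psi(a,x,y) = f2(a (x) x /\ y): linear in each argument, antisymmetric
   in (x,y). *)
Definition f2_data (K : fieldType) (A : comAlgType K) (k z : lmodType K)
    (psi : A -> k -> k -> z) : Prop :=
  [/\ forall x y, lin (fun a => psi a x y),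
      forall a y, lin (fun x => psi a x y),
      forall a x, lin (fun y => psi a x y)
    & forall a x y, psi a y x = - psi a x y].

(* A linear f : Lambda^2(g) -> z, g = A (x) k, is determined by its values
   F a b x y = f(ax /\ by) on wedges of pure tensors.  Since
   (u,v,w) |-> [u,v]/\w + [v,w]/\u + [w,u]/\v is trilinear and g is spanned
   by pure tensors, f is a 2-cocycle iff it vanishes on these elements for
   pure tensors u = ax, v = by, w = cw; with [ax,by] = ab [x,y]. *)
Definition two_cocycle (K : fieldType) (A : comAlgType K) (k z : lmodType K)
    (br : k -> k -> k) (F : A -> A -> k -> k -> z) : Prop :=
  forall (a b c : A) (x y w : k),
    F (a * b) c (br x y) w + F (b * c) a (br y w) x + F (c * a) b (br w x) y = 0.

(* f = f1 o p1 + f2 o p2 (+ f3 o p3 with f3 = 0), with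
   f(ax /\ by) = f1(a/\b (x) x\/y) + f2(ab (x) x/\y).
   Coupled cocycle: f is a 2-cocycle, f3 = 0, and f1 o p1 is not a 2-cocycle. *)
Definition coupled_cocycle (K : fieldType) (A : comAlgType K) (k z : lmodType K)
    (br : k -> k -> k) (phi : A -> A -> k -> k -> z) (psi : A -> k -> k -> z)
    : Prop :=
  two_cocycle br (fun a b x y => phi a b x y + psi (a * b) x y)
  /\ ~ two_cocycle br phi.

(* Composing with linear forms, which separate the points of any vector space
   (Zorn), reduces everything to scalar-valued cochains.  For a scalar coupled
   cocycle f1 o p1 + f2 o p2, adding the cocycle identity at (a, b, 1; x, y, w)
   to the one at (a, b, 1; y, x, w) kills the f2-terms and shows that each
   symmetric form f1(a /\ b (x) -) on k is ad-invariant.  The identity at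
   (1, d, 1) then identifies the cyclic sum of f2(d (x) [-,-] /\ -) with
   f1(1 /\ d (x) [x,y] \/ w), which makes D(x)(w) = f1(1 /\ d (x) x \/ w)
   + f2(d (x) x /\ w) a coadjoint 1-cocycle.  Since H^1(k, k^* ) = 0 it is a
   coboundary, hence alternating, so its symmetric part f1(1 /\ d (x) -)
   vanishes (2 is invertible).  Thus the f2-part of the cocycle identity
   vanishes and f1 o p1 is a 2-cocycle on its own. *)

From HB Require Import structures.
From mathcomp Require Import all_boot all_algebra ring.
From mathcomp Require Import boolp classical_sets.
Set Implicit Arguments. Unset Strict Implicit. Unset Printing Implicit Defensive.
Import GRing.Theory.
Local Open Scope ring_scope.
Local Open Scope classical_set_scope.

Section LinearFor.
Variables (K : fieldType) (U : lmodType K) (V : zmodType) (s : GRing.Scale.law K V).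
Variables (f : U -> V) (hf : linear_for s f).

Lemma linear_forB u u' : f (u - u') = f u - f u'.
Proof. exact: (zmod_morphism_linear hf u u'). Qed.

Lemma linear_for0 : f 0 = 0.
Proof. by rewrite -(subrr (0 : U)) linear_forB subrr. Qed.

Lemma linear_forN u : f (- u) = - f u.
Proof. by rewrite -[- u]sub0r linear_forB linear_for0 sub0r. Qed.

Lemma linear_forD u u' : f (u + u') = f u + f u'.
Proof. by rewrite -[u' in LHS]opprK linear_forB linear_forN opprK. Qed.

End LinearFor.

Lemma lin_form_comp (K : fieldType) (U V : lmodType K) (g : U -> V) (f : V -> K) :
  lin g -> lin_form f -> lin_form (f \o g).
Proof. by move=> hg hf r u u' /=; rewrite hg hf. Qed.

Lemma double_eq0 (K : fieldType) (V : lmodType K) (v : V) :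
  (2%:R : K) != 0 -> (v + v == 0) = (v == 0).
Proof. by move=> two_neq0; rewrite -mulr2n -scaler_nat scaler_eq0 (negbTE two_neq0). Qed.

Section LinearFormSeparation.
Variables (K : fieldType) (V : lmodType K) (v : V).

Definition subspace_avoiding (M : set V) : Prop :=
  (forall r u u', M u -> M u' -> M (r *: u + u')) /\ ~ M v.

Lemma ex_maximal_subspace_avoiding :
  exists M, subspace_avoiding M /\ forall B, M `<` B -> ~ subspace_avoiding B.
Proof.
apply: Zorn_bigcup => F FP Ftot; split.
  move=> r u u' [X FX Xu] [Y FY Yu'].
  have [XY|YX] := Ftot _ _ FX FY.
    by exists Y => //; apply: (FP _ FY).1 => //; apply: XY.
  by exists X => //; apply: (FP _ FX).1 => //; apply: YX.
by move=> [X FX Xv]; apply: (FP _ FX).2.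
Qed.

Hypothesis v_neq0 : v != 0.

Section MaximalAvoiding.
Variable M : set V.
Hypotheses (M_avoiding : subspace_avoiding M)
  (M_max : forall B, M `<` B -> ~ subspace_avoiding B).

Let M_closed := M_avoiding.1.
Let Mv := M_avoiding.2.

Lemma maximal_avoiding0 : M 0.
Proof.
have [[u Mu]|M_empty] := pselect (exists u, M u).
  by rewrite -(addNr u) -scaleN1r; apply: M_closed.
exfalso; have := M_max (B := [set 0]); apply.
  by split=> [u Mu|/(_ 0 erefl) M0]; [case: M_empty; exists u | apply: M_empty; exists 0].
split=> [r u u' -> ->|v0]; first by rewrite scaler0 addr0.
by move: v_neq0; rewrite -v0 eqxx.
Qed.

Lemma maximal_avoiding_spans u : exists t m, M m /\ u = m + t *: v.
Proof.
apply: contrapT => no_decomp.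
have Mu : ~ M u by move=> Mu; apply: no_decomp; exists 0, u; rewrite scale0r addr0.
pose B y := exists t m, M m /\ y = m + t *: u.
have := M_max (B := B); apply.
  split=> [m Mm|/(_ u) BM]; first by exists 0, m; rewrite scale0r addr0.
  apply/Mu/BM; exists 1, 0; split; [exact: maximal_avoiding0 | by rewrite scale1r add0r].
split.
  move=> r _ _ [t [m [Mm ->]]] [t' [m' [Mm' ->]]].
  exists (r * t + t'), (r *: m + m'); split; first exact: M_closed.
  by rewrite scalerDr scalerDl scalerA addrACA.
move=> [t [m [Mm vE]]].
have [t0|t_neq0] := eqVneq t 0; first by apply: Mv; rewrite vE t0 scale0r addr0.
apply: no_decomp; exists t^-1, (- (t^-1 *: m)); split.
  by rewrite -[- _]addr0 -scaleNr; apply: M_closed => //; apply: maximal_avoiding0.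
by rewrite vE scalerDr scalerA mulVf // scale1r addKr.
Qed.

Let M_scale r u : M u -> M (r *: u).
Proof. by move=> Mu; rewrite -[_ *: _]addr0; apply: M_closed => //; apply: maximal_avoiding0. Qed.

Lemma maximal_avoiding_coord_unique t t' m m' :
  M m -> M m' -> m + t *: v = m' + t' *: v -> t = t'.
Proof.
move=> Mm Mm' E; apply: contrapT => /eqP; rewrite -subr_eq0 => dt_neq0; apply: Mv.
have -> : v = (t - t')^-1 *: (m' - m).
  apply: (scalerI dt_neq0); rewrite scalerA mulfV // scale1r scalerBl.
  have -> : t *: v = m' + t' *: v - m by rewrite -E addrAC subrr add0r.
  by rewrite addrAC addrK.
apply: M_scale; rewrite -[m']scale1r -scaleN1r.
by apply: M_closed => //; apply: M_scale.
Qed.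

End MaximalAvoiding.

Lemma lin_form_separating : exists f, lin_form f /\ f v = 1.
Proof.
have [M [M_avoiding M_max]] := ex_maximal_subspace_avoiding.
have [coord coordP] := choice (maximal_avoiding_spans M_avoiding M_max).
pose coord_unique := maximal_avoiding_coord_unique M_avoiding M_max.
exists coord; split.
  move=> r u u'.
  have [m [Mm uE]] := coordP u; have [m' [Mm' uE']] := coordP u'.
  have [m'' [Mm'' uE'']] := coordP (r *: u + u').
  apply: (coord_unique _ _ m'' (r *: m + m')) => //; first exact: M_avoiding.1.
  by rewrite -uE'' {1}uE {1}uE' scalerDr scalerDl scalerA addrACA.
have [m [Mm vE]] := coordP v.
by apply: (coord_unique _ _ m 0) => //; [exact: maximal_avoiding0 | rewrite -vE add0r scale1r].
Qed.

End LinearFormSeparation.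

Lemma lin_forms_eq0 (K : fieldType) (V : lmodType K) (w : V) :
  (forall f, lin_form f -> f w = 0) -> w = 0.
Proof.
have [//|/lin_form_separating [f [hf fw1]] /(_ f hf)] := eqVneq w 0.
by rewrite fw1 => /eqP; rewrite oner_eq0.
Qed.

Lemma lin_add (K : fieldType) (U V : lmodType K) (g h : U -> V) :
  lin g -> lin h -> lin (fun u => g u + h u).
Proof. by move=> hg hh r u u'; rewrite hg hh scalerDr addrACA. Qed.

Lemma lie_bracket_skew (K : fieldType) (k : lmodType K) (br : k -> k -> k) :
  lie_bracket br -> forall x y, br y x = - br x y.
Proof.
case=> br_linl br_linr br_xx _ x y; apply/eqP; rewrite -addr_eq0 addrC.
have := br_xx (x + y).
by rewrite (linear_forD (br_linl _)) !(linear_forD (br_linr _)) !br_xx add0r addr0 => ->.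
Qed.

Lemma coadjoint_cocycle_skew (K : fieldType) (k : lmodType K) (br : k -> k -> k) :
    lie_bracket br -> H1_coadjoint_trivial br ->
  forall D : k -> k -> K,
    (forall x, lin_form (D x)) -> (forall w, lin_form (fun x => D x w)) ->
    (forall x y w, D (br x y) w = - D y (br x w) + D x (br y w)) ->
  forall u v, D v u = - D u v.
Proof.
move=> hbr H1 D D_linr D_linl D_cocycle u v.
have [l [hl Dl]] := H1 D D_linr D_linl D_cocycle.
by rewrite !Dl (lie_bracket_skew hbr) (linear_forN hl).
Qed.

Section ScalarCoupledCocycle.
Variables (K : fieldType) (A : comAlgType K) (k : lmodType K) (br : k -> k -> k).
Hypotheses (two_neq0 : (2%:R : K) != 0) (hbr : lie_bracket br).
Hypothesis H1 : H1_coadjoint_trivial br.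
Variables (phi : A -> A -> k -> k -> K^o) (psi : A -> k -> k -> K^o).
Hypotheses (hphi : f1_data phi) (hpsi : f2_data psi).
Hypothesis hF : two_cocycle br (fun a b x y => phi a b x y + psi (a * b) x y).

Let brN := lie_bracket_skew hbr.

Let phi_linl a b y : lin (fun x => phi a b x y). Proof. by case: hphi => _ [_ []]. Qed.
Let phi_linr a b x : lin (phi a b x). Proof. by case: hphi => _ [_ [_ []]]. Qed.
Let phiC a b x y : phi b a x y = - phi a b x y. Proof. by case: hphi => _ [_ [_ [_ []]]]. Qed.
Let phi_sym a b x y : phi a b y x = phi a b x y. Proof. by case: hphi => _ [_ [_ [_ []]]]. Qed.
Let phiNl a b u y : phi a b (- u) y = - phi a b u y.
Proof. by rewrite (linear_forN (phi_linl a b y)). Qed.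

Let psi_linl d y : lin (fun x => psi d x y). Proof. by case: hpsi. Qed.
Let psi_linr d x : lin (psi d x). Proof. by case: hpsi. Qed.
Let psiC d x y : psi d y x = - psi d x y. Proof. by case: hpsi. Qed.
Let psiNl d u y : psi d (- u) y = - psi d u y.
Proof. by rewrite (linear_forN (psi_linl d y)). Qed.

Let psi_cycle d x y w := psi d (br x y) w + psi d (br y w) x + psi d (br w x) y.

Lemma coupled_cocycle_split a b c x y w :
  phi (a * b) c (br x y) w + phi (b * c) a (br y w) x + phi (c * a) b (br w x) y
  + psi_cycle (a * b * c) x y w = 0.
Proof.
rewrite -[RHS](hF a b c x y w) /psi_cycle.
have -> : b * c * a = a * b * c by ring.
have -> : c * a * b = a * b * c by ring.
ring.
Qed.

Lemma phi_ad_invariant a b x y w : phi a b (br w x) y = phi a b (br y w) x.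
Proof.
have E1 := coupled_cocycle_split a b 1 x y w.
have E2 := coupled_cocycle_split a b 1 y x w.
rewrite /psi_cycle !mulr1 !mul1r in E1 E2.
rewrite (brN x y) (brN w x) (brN y w) !phiNl !psiNl !(phiC a b) in E2.
rewrite !(phiC a b) in E1.
apply/eqP; rewrite -subr_eq0 -(double_eq0 _ two_neq0); apply/eqP.
by rewrite -[RHS](addr0 0) -{1}E1 -E2; ring.
Qed.

Lemma psi_cycleE d x y w : psi_cycle d x y w = phi 1 d (br x y) w.
Proof.
have := coupled_cocycle_split 1 d 1 x y w.
rewrite !mulr1 !mul1r !(phiC 1 d) (phi_ad_invariant 1 d x y w) (phi_ad_invariant 1 d w x y) => E.
by rewrite -[RHS]addr0 -E; ring.
Qed.

Lemma phi1_psi_coadjoint_cocycle d x y w (D := fun x w => phi 1 d x w + psi d x w) :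
  D (br x y) w = - D y (br x w) + D x (br y w).
Proof.
rewrite /D (phi_sym 1 d (br x w)) (phi_sym 1 d (br y w)) (psiC d (br x w)) (psiC d (br y w)).
rewrite (brN w x) phiNl psiNl (phi_ad_invariant 1 d x y w) (phi_ad_invariant 1 d w x y).
have -> : psi d (br x y) w = phi 1 d (br x y) w - psi d (br y w) x - psi d (br w x) y.
  by rewrite -psi_cycleE /psi_cycle; ring.
ring.
Qed.

Lemma phi1_eq0 d u v : phi 1 d u v = 0.
Proof.
pose D x w := phi 1 d x w + psi d x w.
have D_linr x : lin_form (D x) := lin_add (phi_linr 1 d x) (psi_linr d x).
have D_linl w : lin_form (fun x => D x w) := lin_add (phi_linl 1 d w) (psi_linl d w).
have := coadjoint_cocycle_skew hbr H1 D_linr D_linl (phi1_psi_coadjoint_cocycle d) u v.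
rewrite /D phi_sym psiC => E.
apply/eqP; rewrite -(double_eq0 _ two_neq0); apply/eqP.
by rewrite -[RHS](subrr (- (phi 1 d u v + psi d u v))) -{1}E; ring.
Qed.

Lemma two_cocycle_f1_part : two_cocycle br phi.
Proof.
move=> a b c x y w.
by rewrite -[RHS](coupled_cocycle_split a b c x y w) psi_cycleE phi1_eq0 addr0.
Qed.

End ScalarCoupledCocycle.

Lemma two_cocycle_of_forms (K : fieldType) (A : comAlgType K) (k z : lmodType K)
    (br : k -> k -> k) (F : A -> A -> k -> k -> z) :
  (forall f, lin_form f -> two_cocycle (z := K^o) br (fun a b x y => f (F a b x y))) ->
  two_cocycle br F.
Proof.
move=> hF a b c x y w; apply: lin_forms_eq0 => f hf.
by rewrite !(linear_forD hf); apply: hF.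
Qed.

Lemma f1_data_comp (K : fieldType) (A : comAlgType K) (k z : lmodType K)
    (phi : A -> A -> k -> k -> z) (f : z -> K) :
  f1_data phi -> lin_form f -> f1_data (z := K^o) (fun a b x y => f (phi a b x y)).
Proof.
move=> [phi_lina [phi_linb [phi_linx [phi_liny [phiC phi_sym]]]]] hf.
split; first by move=> b x y; exact: lin_form_comp (phi_lina b x y) hf.
split; first by move=> a x y; exact: lin_form_comp (phi_linb a x y) hf.
split; first by move=> a b y; exact: lin_form_comp (phi_linx a b y) hf.
split; first by move=> a b x; exact: lin_form_comp (phi_liny a b x) hf.
split=> a b x y; last by rewrite phi_sym.
by rewrite phiC (linear_forN hf).
Qed.

Lemma f2_data_comp (K : fieldType) (A : comAlgType K) (k z : lmodType K)
    (psi : A -> k -> k -> z) (f : z -> K) :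
  f2_data psi -> lin_form f -> f2_data (z := K^o) (fun d x y => f (psi d x y)).
Proof.
case=> psi_lind psi_linx psi_liny psiC hf; split.
- by move=> x y; exact: lin_form_comp (psi_lind x y) hf.
- by move=> d y; exact: lin_form_comp (psi_linx d y) hf.
- by move=> d x; exact: lin_form_comp (psi_liny d x) hf.
by move=> d x y; rewrite psiC (linear_forN hf).
Qed.

Theorem corollary3p8 (K : fieldType) (A : comAlgType K) (k : lmodType K)
    (br : k -> k -> k) :
  (2%:R : K) != 0 ->
  lie_bracket br ->
  H1_coadjoint_trivial br ->
  forall (z : lmodType K) (phi : A -> A -> k -> k -> z) (psi : A -> k -> k -> z),
    f1_data phi -> f2_data psi -> ~ coupled_cocycle br phi psi.
Proof.
move=> two_neq0 hbr H1 z phi psi hphi hpsi [hF not_phi]; apply: not_phi.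
apply: two_cocycle_of_forms => f hf.
apply: (two_cocycle_f1_part two_neq0 hbr H1 (f1_data_comp hphi hf) (f2_data_comp hpsi hf)).
move=> a b c x y w.
by have := congr1 f (hF a b c x y w); rewrite !(linear_forD hf) (linear_for0 hf).
Qed.
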